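(* Let $K \subset \mathbb R^3$ be a regular convex cone whose boundary is of class $C^k$, $k \geq 5$, and positively curved, and let $\gamma \subset \mathbb{RP}^2$ be the projective image of $\partial K$. Let $\alpha,\beta$ be $2\pi$-periodic real functions of class $C^{k-4}$, $C^{k-5}$ respectively, and let $y:\mathbb R \to \mathbb R^3$ be a $2\pi$-periodic solution of \[ y''' + 2\alpha y' + \alpha' y + \beta y = 0 \] such that $\det(y'',y',y) \equiv 1$, the projective image of $y$ is $\gamma$, and $y(t)$ makes exactly one turn around $K$ along $\partial K$ as $t$ runs over one period. If the eigenvalues of the monodromy of the equation $x'' + \frac12\alpha x = 0$ are not equal to $1$, then $\gamma$ does not possess a global periodic Forsyth–Laguerre parametrization.
   Context: A regular convex cone is a closed convex cone with non-empty interior containing no lines. ''Positively curved boundary'' means $\partial K\setminus\{0\}$ has everywhere positive curvature (transverse to the rays), so that $\gamma$ is a simple closed strictly convex curve without inflection points. The monodromy of $x''+\frac12\alpha x = 0$ is the matrix $T\in SL(2,\mathbb R)$ with $x(t+2\pi)=Tx(t)$ for a vector-valued solution $x:\mathbb R\to\mathbb R^2$ with linearly independent components (its conjugacy class does not depend on the choice of $x$). A global periodic Forsyth–Laguerre parametrization of $\gamma$ is a periodic parametrization of the whole closed curve $\gamma$ by a real variable $s$ (one period corresponding to one traversal of $\gamma$) for which $\gamma$ has a periodic lift $\tilde y(s)$ to $\mathbb R^3$ with $\det(\tilde y'',\tilde y',\tilde y)\equiv 1$ solving $\tilde y''' + 2\tilde\alpha\tilde y' + \tilde\alpha'\tilde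 y + \tilde\beta\tilde y = 0$ with $\tilde\alpha \equiv 0$ (derivatives with respect to $s$). *)

From Stdlib Require Import Reals.
From Coquelicot Require Import Coquelicot.
Open Scope R_scope.

Definition v3 : Type := (R * R * R)%type.
Definition vx (v : v3) : R := fst (fst v).
Definition vy (v : v3) : R := snd (fst v).
Definition vz (v : v3) : R := snd v.
Definition mkv (a b c : R) : v3 := (a, b, c).
Definition vzero : v3 := mkv 0 0 0.
Definition vadd (u v : v3) : v3 := mkv (vx u + vx v) (vy u + vy v) (vz u + vz v).
Definition vscal (c : R) (v : v3) : v3 := mkv (c * vx v) (c * vy v) (c * vz v).
Definition vdist (u v : v3) : R :=
  sqrt ((vx u - vx v)^2 + (vy u - vy v)^2 + (vz u - vz v)^2).

Definition det3 (a b c : v3) : R :=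
  vx a * (vy b * vz c - vz b * vy c)
  - vx b * (vy a * vz c - vz a * vy c)
  + vx c * (vy a * vz b - vz a * vy b).

Definition closed_set (K : v3 -> Prop) : Prop :=
  forall x, (forall e, 0 < e -> exists y, K y /\ vdist x y < e) -> K x.
Definition interior_pt (K : v3 -> Prop) (x : v3) : Prop :=
  exists e, 0 < e /\ forall y, vdist x y < e -> K y.
Definition closure_pt (K : v3 -> Prop) (x : v3) : Prop :=
  forall e, 0 < e -> exists y, K y /\ vdist x y < e.
Definition boundary (K : v3 -> Prop) (x : v3) : Prop :=
  closure_pt K x /\ ~ interior_pt K x.

Definition regular_convex_cone (K : v3 -> Prop) : Prop :=
  closed_set K /\
  (forall u v l, K u -> K v -> 0 <= l <= 1 ->
     K (vadd (vscal l u) (vscal (1 - l) v))) /\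
  (forall u l, K u -> 0 <= l -> K (vscal l u)) /\
  (exists x, interior_pt K x) /\
  (~ exists p d, d <> vzero /\ forall t, K (vadd p (vscal t d))).

Definition proj_eq (u v : v3) : Prop :=
  u <> vzero /\ v <> vzero /\ exists c, c <> 0 /\ u = vscal c v.

Definition in_gamma (K : v3 -> Prop) (v : v3) : Prop :=
  exists w, boundary K w /\ w <> vzero /\ proj_eq v w.

Definition Ck (m : nat) (f : R -> R) : Prop :=
  (forall n, (n <= m)%nat -> forall t, ex_derive_n f n t) /\
  (forall t, continuous (Derive_n f m) t).

Definition cx (y : R -> v3) : R -> R := fun t => vx (y t).
Definition cy (y : R -> v3) : R -> R := fun t => vy (y t).
Definition cz (y : R -> v3) : R -> R := fun t => vz (y t).
Definition Dv (y : R -> v3) (n : nat) (t : R) : v3 :=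
  mkv (Derive_n (cx y) n t) (Derive_n (cy y) n t) (Derive_n (cz y) n t).
Definition diff_upto (m : nat) (y : R -> v3) : Prop :=
  forall n, (n <= m)%nat -> forall t,
    ex_derive_n (cx y) n t /\ ex_derive_n (cy y) n t /\ ex_derive_n (cz y) n t.
Definition Ck_curve (m : nat) (y : R -> v3) : Prop :=
  Ck m (cx y) /\ Ck m (cy y) /\ Ck m (cz y).

(* The boundary minus the origin is a C^k cone surface { r c(t) : r > 0 },
   traced (ray by ray, exactly once per period) by a 2pi-periodic C^k curve c
   with nonvanishing transverse curvature det(c'',c',c) <> 0. *)
Definition Ck_pos_curved_boundary (k : nat) (K : v3 -> Prop) : Prop :=
  exists c : R -> v3,
    Ck_curve k c /\
    (forall t, c (t + 2 * PI) = c t) /\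
    (forall t, boundary K (c t) /\ c t <> vzero) /\
    (forall t, det3 (Dv c 2 t) (Dv c 1 t) (c t) <> 0) /\
    (forall s t, 0 <= s < 2 * PI -> 0 <= t < 2 * PI -> proj_eq (c s) (c t) -> s = t) /\
    (forall v, boundary K v -> v <> vzero ->
       exists t, 0 <= t < 2 * PI /\ proj_eq (c t) v).

Definition hill_solution (alpha : R -> R) (x : R -> R) : Prop :=
  (forall n, (n <= 2)%nat -> forall t, ex_derive_n x n t) /\
  (forall t, Derive_n x 2 t + / 2 * alpha t * x t = 0).

Definition is_monodromy (alpha : R -> R) (a b c d : R) : Prop :=
  exists x1 x2 : R -> R,
    hill_solution alpha x1 /\ hill_solution alpha x2 /\
    (forall l1 l2, (forall t, l1 * x1 t + l2 * x2 t = 0) -> l1 = 0 /\ l2 = 0) /\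
    (forall t, x1 (t + 2 * PI) = a * x1 t + b * x2 t /\
               x2 (t + 2 * PI) = c * x1 t + d * x2 t).

Definition has_eigenvalue_one (a b c d : R) : Prop :=
  exists v1 v2, (v1 <> 0 \/ v2 <> 0) /\ a * v1 + b * v2 = v1 /\ c * v1 + d * v2 = v2.

Definition global_periodic_FL_param (K : v3 -> Prop) : Prop :=
  exists (L : R) (yt : R -> v3) (bt : R -> R),
    0 < L /\
    diff_upto 3 yt /\
    (forall s, yt (s + L) = yt s) /\
    (forall s, in_gamma K (yt s)) /\
    (forall s1 s2, 0 <= s1 < L -> 0 <= s2 < L -> proj_eq (yt s1) (yt s2) -> s1 = s2) /\
    (forall v, in_gamma K v -> exists s, 0 <= s < L /\ proj_eq (yt s) v) /\
    (forall s, det3 (Dv yt 2 s) (Dv yt 1 s) (yt s) = 1) /\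
    (* y''' + 2 a y' + a' y + b y = 0 with a = 0 *)
    (forall s, vadd (Dv yt 3 s) (vscal (bt s) (yt s)) = vzero).

(* Suppose [Y] is a global periodic Forsyth-Laguerre parametrization of gamma.  Both [Y] and
   [y] trace gamma once per period, so near every [t] there is a continuous reparametrization
   [sigma] with [Y (sigma t) = lam t * y t], where the scale [lam] is globally defined and
   2pi-periodic because [y] is.  Differentiating this identity twice and using
   [det (Y'', Y', Y) = det (y'', y', y) = 1] forces [sigma' = lam]; differentiating once more
   and comparing [Y''' + b Y = 0] with [y''' + 2 alpha y' + (alpha' + beta) y = 0] shows that
   [mu = lam' / lam] solves the Riccati equation [2 mu' = mu^2 + 2 alpha].  Hence
   [x = |lam|^(-1/2)] is a positive 2pi-periodic solution of [x'' + alpha x / 2 = 0], and its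
   Wronskians with a fundamental system [(x1, x2)] form a nonzero fixed vector of the
   monodromy. *)

From Stdlib Require Import Reals Lra Lia ZArith ClassicalEpsilon.
From Coquelicot Require Import Coquelicot.
Open Scope R_scope.

(** * Vector algebra in R^3 *)

Definition vdot (u v : v3) : R := vx u * vx v + vy u * vy v + vz u * vz v.

Definition vcross (u v : v3) : v3 :=
  mkv (vy u * vz v - vz u * vy v) (vz u * vx v - vx u * vz v) (vx u * vy v - vy u * vx v).

Definition vnorm2 (u : v3) : R := vdot u u.

Definition vpar (u v : v3) : Prop := exists c, u = vscal c v.

Definition coordinate (pr : v3 -> R) : Prop := pr = vx \/ pr = vy \/ pr = vz.

Lemma v3_ext (u v : v3) : vx u = vx v -> vy u = vy v -> vz u = vz v -> u = v.
Proof. destruct u as [[a b] c], v as [[d e] f]; cbv; intros; subst; reflexivity. Qed.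

Lemma v3_ext_coordinate (u v : v3) :
  (forall pr, coordinate pr -> pr u = pr v) -> u = v.
Proof. intros H; apply v3_ext; apply H; unfold coordinate; tauto. Qed.

Lemma coordinate_vadd (pr : v3 -> R) (u v : v3) :
  coordinate pr -> pr (vadd u v) = pr u + pr v.
Proof. intros [-> | [-> | ->]]; reflexivity. Qed.

Lemma coordinate_vscal (pr : v3 -> R) (c : R) (u : v3) :
  coordinate pr -> pr (vscal c u) = c * pr u.
Proof. intros [-> | [-> | ->]]; reflexivity. Qed.

Lemma coordinate_vzero (pr : v3 -> R) : coordinate pr -> pr vzero = 0.
Proof. intros [-> | [-> | ->]]; reflexivity. Qed.

Lemma vnorm2_gt0 (u : v3) : u <> vzero -> 0 < vnorm2 u.
Proof.
  destruct u as [[a b] c]; unfold vnorm2, vdot; cbv [vx vy vz fst snd]; intros H.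
  destruct (Req_dec a 0), (Req_dec b 0), (Req_dec c 0); subst;
    try (elim H; reflexivity); nra.
Qed.

Lemma det3_eq1_neq0 (a b c : v3) : det3 a b c = 1 -> c <> vzero.
Proof. intros H ->; revert H; cbv [det3 vzero mkv vx vy vz fst snd]; lra. Qed.

Lemma vscal_neq0 (c : R) (v : v3) : vscal c v <> vzero -> c <> 0.
Proof. intros H ->; apply H; unfold vscal, vzero, mkv; repeat f_equal; ring. Qed.

Lemma vscal_inj (c c' : R) (v : v3) : v <> vzero -> vscal c v = vscal c' v -> c = c'.
Proof.
  intros Hv E; destruct (Req_dec (c - c') 0) as [Hc | Hc]; [lra|]; exfalso; apply Hv.
  destruct v as [[a b] d]; cbv [vscal mkv vx vy vz fst snd] in E.
  injection E; intros e3 e2 e1.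
  apply v3_ext; cbv [vzero mkv vx vy vz fst snd];
    apply (Rmult_eq_reg_l (c - c')); lra.
Qed.

Lemma vdot_vscal (c : R) (u w : v3) : vdot (vscal c u) w = c * vdot u w.
Proof. unfold vdot, vscal, mkv, vx, vy, vz; simpl; ring. Qed.

Lemma vcross_eq0_vpar (u v : v3) : v <> vzero -> vcross u v = vzero -> vpar u v.
Proof.
  intros Hv H; exists (vdot u v / vnorm2 v).
  pose proof (vnorm2_gt0 v Hv) as P; revert H P.
  destruct u as [[a b] c], v as [[d e] f]; cbv [vnorm2 vcross vdot vscal vzero mkv vx vy vz fst snd].
  intros H P; injection H; intros k3 k2 k1.
  assert (e * (a * e - b * d) = 0 /\ f * (c * d - a * f) = 0 /\ d * (a * e - b * d) = 0 /\
          f * (b * f - c * e) = 0 /\ d * (c * d - a * f) = 0 /\ e * (b * f - c * e) = 0)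
    by (rewrite k1, k2, k3; repeat split; ring).
  f_equal; [f_equal|]; field_simplify_eq; lra.
Qed.

Definition vsin2 (u w : v3) : R := vnorm2 (vcross u w) / vnorm2 u.

Lemma vsin2_vscal (c : R) (u w : v3) : c <> 0 -> vsin2 (vscal c u) w = vsin2 u w.
Proof.
  intros Hc; destruct u as [[a b] d], w as [[e f] g].
  cbv [vsin2 vnorm2 vcross vdot vscal mkv vx vy vz fst snd].
  destruct (Req_dec (a * a + b * b + d * d) 0) as [H0|H0].
  - replace (c * a * (c * a) + c * b * (c * b) + c * d * (c * d))
      with (c * c * (a * a + b * b + d * d)) by ring.
    rewrite H0, Rmult_0_r; unfold Rdiv; rewrite !Rinv_0; ring.
  - field; split; [exact H0|].
    replace (c * a * (c * a) + c * b * (c * b) + c * d * (c * d))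
      with (c * c * (a * a + b * b + d * d)) by ring.
    apply Rmult_integral_contrapositive; split; [|exact H0].
    apply Rmult_integral_contrapositive; split; exact Hc.
Qed.

Lemma vsin2_self (w : v3) : vsin2 w w = 0.
Proof.
  destruct w as [[a b] c]; cbv [vsin2 vnorm2 vcross vdot mkv vx vy vz fst snd].
  unfold Rdiv; ring.
Qed.

Definition vorth (q p : v3) : v3 := vadd q (vscal (- (vdot q p / vnorm2 p)) p).

Lemma vdot_vorth_r (q p : v3) : p <> vzero -> vdot p (vorth q p) = 0.
Proof.
  intros Hp; pose proof (vnorm2_gt0 p Hp) as P; revert P.
  destruct q as [[q1 q2] q3], p as [[p1 p2] p3].
  cbv [vorth vnorm2 vdot vadd vscal mkv vx vy vz fst snd]; intros P; field; lra.
Qed.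

Lemma vdot_vorth (q p : v3) : p <> vzero -> vdot q (vorth q p) * vnorm2 p = vnorm2 (vcross q p).
Proof.
  intros Hp; pose proof (vnorm2_gt0 p Hp) as P; revert P.
  destruct q as [[q1 q2] q3], p as [[p1 p2] p3].
  cbv [vorth vnorm2 vdot vcross vadd vscal mkv vx vy vz fst snd]; intros P; field; lra.
Qed.

Lemma det3_vdot_vcross (r q p : v3) : det3 r q p = vdot r (vcross q p).
Proof.
  destruct r as [[? ?] ?], q as [[? ?] ?], p as [[? ?] ?].
  cbv [det3 vdot vcross mkv vx vy vz fst snd]; ring.
Qed.

Lemma det3_vcross_neq0 (r q p : v3) : det3 r q p = 1 -> vcross q p <> vzero.
Proof.
  intros H E; rewrite det3_vdot_vcross, E in H; revert H.
  cbv [vdot vzero mkv vx vy vz fst snd]; lra.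
Qed.

Lemma det3_vscal_r (r q w : v3) (c : R) : det3 r q (vscal c w) = c * vdot r (vcross q w).
Proof.
  destruct r as [[? ?] ?], q as [[? ?] ?], w as [[? ?] ?].
  cbv [det3 vdot vcross vscal mkv vx vy vz fst snd]; ring.
Qed.

Lemma vscal_combination_vcross (B w d : v3) (S c l : R) :
  vscal S B = vadd (vscal c w) (vscal l d) ->
  S * vnorm2 (vcross B w) = l * vdot (vcross d w) (vcross B w).
Proof.
  destruct B as [[b1 b2] b3], w as [[w1 w2] w3], d as [[d1 d2] d3].
  cbv [vnorm2 vdot vcross vscal vadd mkv vx vy vz fst snd]; intros E.
  injection E; intros e3 e2 e1.
  transitivity (((S * b2) * w3 - (S * b3) * w2) * (b2 * w3 - b3 * w2)
                + ((S * b3) * w1 - (S * b1) * w3) * (b3 * w1 - b1 * w3)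
                + ((S * b1) * w2 - (S * b2) * w1) * (b1 * w2 - b2 * w1)); [ring|].
  rewrite e1, e2, e3; ring.
Qed.

Lemma vscal_combination_vdot (B w d : v3) (S c l : R) :
  vscal S B = vadd (vscal c w) (vscal l d) -> S * vdot B w = c * vnorm2 w + l * vdot d w.
Proof.
  destruct B as [[b1 b2] b3], w as [[w1 w2] w3], d as [[d1 d2] d3].
  cbv [vnorm2 vdot vscal vadd mkv vx vy vz fst snd]; intros E.
  injection E; intros e3 e2 e1.
  transitivity ((S * b1) * w1 + (S * b2) * w2 + (S * b3) * w3); [ring|].
  rewrite e1, e2, e3; ring.
Qed.

Lemma det3_reparam_cube (A B P a b p : v3) (S S2 l L1 L2 : R) :
  det3 A B P = 1 -> det3 a b p = 1 -> P = vscal l p ->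
  vscal S B = vadd (vscal L1 p) (vscal l b) ->
  vadd (vscal (S * S) A) (vscal S2 B) = vadd (vadd (vscal L2 p) (vscal (2 * L1) b)) (vscal l a) ->
  S ^ 3 = l ^ 3.
Proof.
  intros HA Ha EP E1 E2.
  assert (HS : S ^ 3 = det3 (vadd (vscal (S * S) A) (vscal S2 B)) (vscal S B) P).
  { rewrite <- (Rmult_1_r (S ^ 3)), <- HA.
    destruct A as [[? ?] ?], B as [[? ?] ?], P as [[? ?] ?].
    cbv [det3 vscal vadd mkv vx vy vz fst snd]; ring. }
  rewrite HS, E2, E1, EP, <- (Rmult_1_r (l ^ 3)), <- Ha.
  destruct a as [[? ?] ?], b as [[? ?] ?], p as [[? ?] ?].
  cbv [det3 vscal vadd mkv vx vy vz fst snd]; ring.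
Qed.

Lemma det3_eq1_independent (a b p : v3) (c B : R) :
  det3 a b p = 1 -> vadd (vscal c p) (vscal B b) = vzero -> B = 0.
Proof.
  destruct a as [[a1 a2] a3], b as [[b1 b2] b3], p as [[p1 p2] p3].
  cbv [det3 vadd vscal vzero mkv vx vy vz fst snd]; intros H E; injection E; intros e3 e2 e1.
  rewrite <- (Rmult_1_r B), <- H.
  transitivity (a1 * ((c * p2 + B * b2) * p3 - (c * p3 + B * b3) * p2)
                - (c * p1 + B * b1) * (a2 * p3 - a3 * p2)
                + p1 * (a2 * (c * p3 + B * b3) - a3 * (c * p2 + B * b2))); [ring|].
  rewrite e1, e2, e3; ring.
Qed.

Ltac etafold :=
  repeat match goal with
  | |- context [fun x : R => ?f x] => change (fun x : R => f x) with f
  | H : context [fun x : R => ?f x] |- _ => change (fun x : R => f x) with f in H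
  end.

Lemma is_derive0_const (f : R -> R) : (forall t, is_derive f t 0) -> forall a b, f a = f b.
Proof.
  intros H a b.
  destruct (MVT_cor4 f (fun _ => 0) a (Rabs (b - a))) with (b := b) as [c [Hc _]];
    [intros; apply H | apply Rle_refl | lra].
Qed.

Lemma Derive_shift (f g : R -> R) (P t : R) :
  (forall u, f (u + P) = g u) -> ex_derive f (t + P) -> Derive g t = Derive f (t + P).
Proof.
  intros Hfg Hf; apply is_derive_unique, (is_derive_ext (fun u => f (u + P))); [exact Hfg|].
  auto_derive; [exact Hf | etafold; ring].
Qed.

Lemma is_derive_domin (f : R -> R) (x l : R) :
  is_derive f x l <->
  forall eps : posreal,
    locally x (fun y => Rabs (f y - f x - (y - x) * l) <= eps * Rabs (y - x)).
Proof.
  split.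
  - intros [_ H]. exact (H x (fun P h => h)).
  - intros H. split; [apply is_linear_scal_l|]. intros z Hz.
    apply (@is_filter_lim_locally_unique R_AbsRing R_NormedModule) in Hz.
    subst z. exact H.
Qed.

Lemma inverse_increment_bound (G F D k h e1 e2 : R) :
  G <> 0 -> 0 <= e1 -> 2 * e1 <= Rabs G ->
  Rabs (D - k * G) <= e1 * Rabs k -> Rabs (D - h * F) <= e2 * Rabs h ->
  Rabs (k - h * (F / G)) * (Rabs G * Rabs G)
    <= (2 * e1 * (Rabs F + e2) + e2 * Rabs G) * Rabs h.
Proof.
  intros HG He1 He1G Hk Hh.
  assert (HaG : 0 < Rabs G) by (apply Rabs_pos_lt; exact HG).
  assert (HkG : Rabs (k * G) <= Rabs (D - k * G) + Rabs D).
  { rewrite <- (Rabs_Ropp (D - k * G)).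
    replace (k * G) with (- (D - k * G) + D) at 1 by ring. apply Rabs_triang. }
  assert (HD : Rabs D <= Rabs (D - h * F) + Rabs (h * F)).
  { replace D with ((D - h * F) + h * F) at 1 by ring. apply Rabs_triang. }
  assert (Hdiff : Rabs (k - h * (F / G)) * Rabs G <= Rabs (D - k * G) + Rabs (D - h * F)).
  { rewrite <- Rabs_mult, <- (Rabs_Ropp (D - k * G)).
    replace ((k - h * (F / G)) * G) with (- (D - k * G) + (D - h * F)) by (field; exact HG).
    apply Rabs_triang. }
  rewrite Rabs_mult in HkG, HD.
  pose proof (Rabs_pos k). pose proof (Rabs_pos h). pose proof (Rabs_pos F).
  assert (Hkb : Rabs k * Rabs G <= 2 * (Rabs F + e2) * Rabs h) by nra.
  assert (Rabs (k - h * (F / G)) * Rabs G <= e1 * Rabs k + e2 * Rabs h) by lra.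
  nra.
Qed.

Lemma is_derive_implicit (sig f g : R -> R) (t F G : R) :
  locally t (fun u => g (sig u) = f u) -> continuous sig t ->
  is_derive g (sig t) G -> G <> 0 -> is_derive f t F ->
  is_derive sig t (F / G).
Proof.
  intros Heq Hsig Hg HG Hf; apply is_derive_domin; intros eps.
  set (a := Rabs G); assert (Ha : 0 < a) by (apply Rabs_pos_lt; exact HG).
  pose proof (Rabs_pos F) as HF; pose proof (cond_pos eps) as Heps.
  set (e1 := Rmin (a / 2) (eps * (a * a) / (4 * (Rabs F + 1)))).
  set (e2 := Rmin 1 (eps * a / 2)).
  assert (He1 : 0 < e1)
    by (apply Rmin_pos; [lra|apply Rdiv_lt_0_compat; [apply Rmult_lt_0_compat; nra|lra]]).
  assert (He2 : 0 < e2) by (apply Rmin_pos; nra).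
  assert (He1a : 2 * e1 <= a) by (enough (e1 <= a / 2) by lra; apply Rmin_l).
  assert (He1F : e1 * (4 * (Rabs F + 1)) <= eps * (a * a)).
  { apply Rmult_le_reg_r with (/ (4 * (Rabs F + 1))); [apply Rinv_0_lt_compat; lra|].
    rewrite Rmult_assoc, Rinv_r, Rmult_1_r by lra; apply Rmin_r. }
  assert (e2 <= 1) by apply Rmin_l; assert (e2 <= eps * a / 2) by apply Rmin_r.
  assert (Hsum : 2 * e1 * (Rabs F + e2) + e2 * a <= eps * (a * a)) by nra.
  pose proof (proj1 (is_derive_domin _ _ _) Hg (mkposreal e1 He1)) as Hg1.
  pose proof (proj1 (is_derive_domin _ _ _) Hf (mkposreal e2 He2)) as Hf1.
  apply Hsig in Hg1; unfold filtermap in Hg1.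
  generalize (filter_and _ _ Heq (filter_and _ _ Hg1 Hf1)); apply filter_imp.
  intros u [Hu [Hgu Hfu]]; simpl in Hgu, Hfu; simpl.
  rewrite Hu, (locally_singleton _ _ Heq) in Hgu.
  pose proof (inverse_increment_bound G F _ _ _ e1 e2 HG (Rlt_le _ _ He1) He1a Hgu Hfu) as Hb.
  fold a in Hb; pose proof (Rabs_pos (u - t)).
  apply Rmult_le_reg_r with (a * a); nra.
Qed.

Lemma Derive_reparam_scale (Yc yc sig lam : R -> R) (t : R) :
  locally t (fun u => Yc (sig u) = lam u * yc u) ->
  ex_derive Yc (sig t) -> ex_derive sig t -> ex_derive lam t -> ex_derive yc t ->
  Derive Yc (sig t) * Derive sig t = Derive lam t * yc t + lam t * Derive yc t.
Proof.
  intros Heq DY Ds Dl Dy.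
  assert (HA : is_derive (fun u => lam u * yc u) t (Derive Yc (sig t) * Derive sig t)).
  { apply (is_derive_ext_loc (fun u => Yc (sig u))); [exact Heq|].
    auto_derive; [repeat split; assumption|etafold; ring]. }
  assert (HB : is_derive (fun u => lam u * yc u) t (Derive lam t * yc t + lam t * Derive yc t))
    by (auto_derive; [repeat split; assumption|etafold; ring]).
  rewrite <- (is_derive_unique _ _ _ HA); exact (is_derive_unique _ _ _ HB).
Qed.

Lemma Derive2_reparam_scale (Yc yc sig lam : R -> R) (t : R) :
  locally t (fun u => Derive Yc (sig u) * Derive sig u = Derive lam u * yc u + lam u * Derive yc u) ->
  ex_derive (Derive Yc) (sig t) -> ex_derive sig t -> ex_derive (Derive sig) t ->
  ex_derive lam t -> ex_derive (Derive lam) t -> ex_derive yc t -> ex_derive (Derive yc) t ->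
  Derive (Derive Yc) (sig t) * Derive sig t * Derive sig t + Derive Yc (sig t) * Derive (Derive sig) t
  = Derive (Derive lam) t * yc t + 2 * Derive lam t * Derive yc t + lam t * Derive (Derive yc) t.
Proof.
  intros Heq DY Ds Ds' Dl Dl' Dy Dy'.
  assert (HA : is_derive (fun u => Derive lam u * yc u + lam u * Derive yc u) t
     (Derive (Derive Yc) (sig t) * Derive sig t * Derive sig t + Derive Yc (sig t) * Derive (Derive sig) t)).
  { apply (is_derive_ext_loc (fun u => Derive Yc (sig u) * Derive sig u)); [exact Heq|].
    auto_derive; [repeat split; assumption|etafold; ring]. }
  assert (HB : is_derive (fun u => Derive lam u * yc u + lam u * Derive yc u) t
     (Derive (Derive lam) t * yc t + 2 * Derive lam t * Derive yc t + lam t * Derive (Derive yc) t))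
    by (auto_derive; [repeat split; assumption|etafold; ring]).
  rewrite <- (is_derive_unique _ _ _ HA); exact (is_derive_unique _ _ _ HB).
Qed.

Definition dlog (f : R -> R) (t : R) : R := Derive f t / f t.

Lemma is_derive_dlog (f : R -> R) (t : R) :
  f t <> 0 -> ex_derive f t -> ex_derive (Derive f) t ->
  is_derive (dlog f) t (Derive (Derive f) t / f t - dlog f t ^ 2).
Proof.
  intros H0 H1 H2; unfold dlog.
  auto_derive; [repeat split; assumption|etafold; field; exact H0].
Qed.

(** * Hill's equation *)

Definition wronskian (u v : R -> R) (t : R) : R := u t * Derive v t - Derive u t * v t.

Section Hill.
Variable alpha : R -> R.

Lemma hill_ex_derive (x : R -> R) (t : R) : hill_solution alpha x -> ex_derive x t.
Proof. intros [Hx _]; exact (Hx 1%nat ltac:(lia) t). Qed.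

Lemma hill_ex_derive2 (x : R -> R) (t : R) : hill_solution alpha x -> ex_derive (Derive x) t.
Proof. intros [Hx _]; exact (Hx 2%nat ltac:(lia) t). Qed.

Lemma wronskian_const (u v : R -> R) (t : R) :
  hill_solution alpha u -> hill_solution alpha v -> wronskian u v t = wronskian u v 0.
Proof.
  intros Hu Hv; apply is_derive0_const; clear t; intros t.
  pose proof (hill_ex_derive u t Hu); pose proof (hill_ex_derive2 u t Hu).
  pose proof (hill_ex_derive v t Hv); pose proof (hill_ex_derive2 v t Hv).
  pose proof (proj2 Hu t) as Eu; pose proof (proj2 Hv t) as Ev; simpl in Eu, Ev.
  unfold wronskian; auto_derive; [repeat split; assumption|etafold; nra].
Qed.

Lemma wronskian_monodromy (x u x1 x2 : R -> R) (a b P : R) :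
  hill_solution alpha x -> hill_solution alpha u ->
  hill_solution alpha x1 -> hill_solution alpha x2 ->
  (forall t, x (t + P) = x t) -> (forall t, u (t + P) = a * x1 t + b * x2 t) ->
  wronskian x u 0 = a * wronskian x x1 0 + b * wronskian x x2 0.
Proof.
  intros Hx Hu H1 H2 Hxper Hu12.
  rewrite <- (wronskian_const x u P Hx Hu); unfold wronskian.
  replace P with (0 + P) by ring.
  rewrite <- (Derive_shift x x P 0 Hxper), <- (Derive_shift u _ P 0 Hu12), Hxper, Hu12
    by (apply hill_ex_derive; assumption).
  pose proof (hill_ex_derive x1 0 H1); pose proof (hill_ex_derive x2 0 H2).
  rewrite Derive_plus, !Derive_scal; [ring|apply ex_derive_scal; assumption..].
Qed.

Lemma wronskian_eq0_proportional (x u : R -> R) :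
  (forall t, ex_derive x t) -> (forall t, ex_derive u t) -> (forall t, 0 < x t) ->
  (forall t, wronskian x u t = 0) -> forall t, u t = u 0 / x 0 * x t.
Proof.
  intros Hx Hu Hpos HW t.
  assert (Hratio : forall s, is_derive (fun r => u r / x r) s 0).
  { intros s; pose proof (Hx s); pose proof (Hu s); pose proof (Hpos s); pose proof (HW s) as Hs.
    unfold wronskian in Hs.
    auto_derive; [repeat split; auto; lra|etafold].
    apply Rmult_eq_reg_r with (x s * x s); [|nra].
    field_simplify; [|lra]. nra. }
  pose proof (Hpos t); pose proof (Hpos 0).
  rewrite (is_derive0_const _ Hratio 0 t). field; lra.
Qed.

(* The Wronskians [(W(x,x1), W(x,x2))] form a fixed vector of the monodromy, which vanishes
   only if [x1] and [x2] are both multiples of [x]. *)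
Lemma positive_periodic_hill_eigenvalue_one (x : R -> R) (a b c d : R) :
  hill_solution alpha x -> (forall t, 0 < x t) -> (forall t, x (t + 2 * PI) = x t) ->
  is_monodromy alpha a b c d -> has_eigenvalue_one a b c d.
Proof.
  intros Hx Hpos Hper [x1 [x2 [H1 [H2 [Hindep Hmono]]]]].
  set (w1 := wronskian x x1 0); set (w2 := wronskian x x2 0).
  assert (E1 : w1 = a * w1 + b * w2)
    by (apply (wronskian_monodromy x x1 x1 x2 a b (2 * PI)); auto; apply Hmono).
  assert (E2 : w2 = c * w1 + d * w2)
    by (apply (wronskian_monodromy x x2 x1 x2 c d (2 * PI)); auto; apply Hmono).
  destruct (Req_dec w1 0) as [Hw1|Hw1]; destruct (Req_dec w2 0) as [Hw2|Hw2];
    try (exists w1, w2; split; [tauto|split; lra]).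
  exfalso.
  assert (Hprop : forall xi, hill_solution alpha xi -> wronskian x xi 0 = 0 ->
                  forall t, xi t = xi 0 / x 0 * x t).
  { intros xi Hxi Hw0; apply wronskian_eq0_proportional; auto.
    - intros; apply hill_ex_derive; assumption.
    - intros; apply hill_ex_derive; assumption.
    - intros t; rewrite wronskian_const; assumption. }
  destruct (Hindep (x2 0 / x 0) (- (x1 0 / x 0))) as [Hc2 Hc1].
  { intros t; rewrite (Hprop x1 H1 Hw1 t), (Hprop x2 H2 Hw2 t); ring. }
  destruct (Hindep 1 0) as [Hone _]; [|lra].
  intros t; rewrite (Hprop x1 H1 Hw1 t).
  replace (x1 0 / x 0) with 0 by lra; ring.
Qed.
End Hill.

Definition riccati_scale (alpha lam : R -> R) (t : R) : Prop :=
  lam t <> 0 /\ ex_derive lam t /\ ex_derive (dlog lam) t /\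
  2 * Derive (dlog lam) t = dlog lam t ^ 2 + 2 * alpha t.

(* [exp (- / 4 * ln (lam t ^ 2))] is [|lam t|^(-1/2)]. *)
Lemma hill_solution_of_scale (alpha lam : R -> R) :
  (forall t, riccati_scale alpha lam t) ->
  hill_solution alpha (fun t => exp (- / 4 * ln (lam t ^ 2))).
Proof.
  intros Hlam; set (x := fun t => exp (- / 4 * ln (lam t ^ 2))).
  set (x' := fun t => - dlog lam t / 2 * x t).
  assert (Dx : forall t, is_derive x t (x' t)).
  { intros t; destruct (Hlam t) as [H0 [H1 _]]; unfold x', x, dlog.
    auto_derive; [repeat split; auto; apply pow2_gt_0; exact H0|etafold].
    replace (lam t * (lam t * 1)) with (lam t ^ 2) by ring; field; exact H0. }
  assert (Dx' : forall t, is_derive x' t (- (/ 2 * alpha t * x t))).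
  { intros t; destruct (Hlam t) as [_ [_ [H2 Hric]]].
    assert (ex_derive x t) by (eexists; apply Dx).
    unfold x'; clearbody x.
    auto_derive; [repeat split; assumption|etafold].
    rewrite (is_derive_unique _ _ _ (Dx t)); unfold x'.
    replace (Derive (dlog lam) t) with ((dlog lam t ^ 2 + 2 * alpha t) / 2) by lra; field. }
  assert (DxE : forall t, Derive x t = x' t) by (intros t; apply is_derive_unique, Dx).
  split.
  - intros [|[|[|n]]] Hn t; simpl.
    + exact I.
    + eexists; apply Dx.
    + apply (ex_derive_ext x'); [intros u; symmetry; apply DxE|eexists; apply Dx'].
    + lia.
  - intros t; simpl; etafold.
    rewrite (Derive_ext _ x' t DxE), (is_derive_unique _ _ _ (Dx' t)); ring.
Qed.

(** * Curves in R^3 *)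

(* [Z s] with its coordinates exposed, so that [auto_derive] can differentiate through it. *)
Definition vpoint (Z : R -> v3) (s : R) : v3 := mkv (cx Z s) (cy Z s) (cz Z s).

Lemma vpointE (Z : R -> v3) (s : R) : vpoint Z s = Z s.
Proof. apply v3_ext; reflexivity. Qed.

Lemma continuous_vsin2 (Z : R -> v3) (w : v3) (s : R) :
  ex_derive (cx Z) s -> ex_derive (cy Z) s -> ex_derive (cz Z) s -> Z s <> vzero ->
  continuity_pt (fun r => vsin2 (vpoint Z r) w) s.
Proof.
  intros Dx Dy Dz HZ; apply continuity_pt_filterlim.
  match goal with |- filterlim ?f _ _ => cut (ex_derive f s) end;
    [intros Hd; exact (ex_derive_continuous _ _ Hd)|].
  pose proof (vnorm2_gt0 _ HZ) as P; rewrite <- (vpointE Z s) in P; revert P.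
  cbv [vsin2 vnorm2 vcross vdot vpoint mkv vx vy vz fst snd]; intros P.
  auto_derive; repeat split; auto; lra.
Qed.

Lemma Dv_coordinate (Z : R -> v3) (pr : v3 -> R) (n : nat) (t : R) :
  coordinate pr -> pr (Dv Z n t) = Derive_n (fun s => pr (Z s)) n t.
Proof. intros [-> | [-> | ->]]; reflexivity. Qed.

Lemma ex_derive_coordinate (m : nat) (Z : R -> v3) (pr : v3 -> R) (n : nat) (t : R) :
  diff_upto m Z -> coordinate pr -> (n < m)%nat ->
  ex_derive (Derive_n (fun s => pr (Z s)) n) t.
Proof. intros HZ [-> | [-> | ->]] Hn; apply (HZ (S n) Hn t). Qed.

Lemma diff_upto_ex_derive (m : nat) (Z : R -> v3) (s : R) : diff_upto m Z -> (0 < m)%nat ->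
  ex_derive (cx Z) s /\ ex_derive (cy Z) s /\ ex_derive (cz Z) s.
Proof. intros HZ Hm; exact (HZ 1%nat Hm s). Qed.

Lemma is_derive_vdot_ratio (Z : R -> v3) (a b : v3) (s : R) :
  ex_derive (cx Z) s -> ex_derive (cy Z) s -> ex_derive (cz Z) s -> vdot (Z s) b <> 0 ->
  is_derive (fun u => vdot (vpoint Z u) a / vdot (vpoint Z u) b) s
    ((vdot (Dv Z 1 s) a * vdot (Z s) b - vdot (Z s) a * vdot (Dv Z 1 s) b)
       / (vdot (Z s) b * vdot (Z s) b)).
Proof.
  intros Dx Dy Dz Hb; rewrite <- (vpointE Z s) in *; revert Hb.
  destruct a as [[a1 a2] a3], b as [[b1 b2] b3].
  cbv [vdot vpoint mkv vx vy vz fst snd Dv Derive_n]; intros Hb.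
  auto_derive; [repeat split; assumption|etafold; field; exact Hb].
Qed.

(** * Rays of a periodic curve *)

Lemma periodic_IZR {A : Type} (f : R -> A) (L : R) :
  (forall s, f (s + L) = f s) -> forall (n : Z) (s : R), f (s + IZR n * L) = f s.
Proof.
  intros Hper.
  assert (Hnat : forall (n : nat) s, f (s + INR n * L) = f s).
  { induction n as [|n IH]; intros s; [simpl; f_equal; ring|].
    rewrite S_INR, <- (IH s), <- (Hper (s + INR n * L)); f_equal; ring. }
  intros [|p|p] s.
  - simpl; f_equal; ring.
  - rewrite <- positive_nat_Z, <- INR_IZR_INZ; apply Hnat.
  - rewrite <- (Hnat (Pos.to_nat p) (s + IZR (Z.neg p) * L)); f_equal.
    rewrite INR_IZR_INZ, positive_nat_Z, <- Pos2Z.opp_pos, opp_IZR; ring.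
Qed.

Lemma exists_shift_into_period (L s : R) : 0 < L -> exists n, 0 <= s - IZR n * L < L.
Proof.
  intros HL; destruct (archimed (s / L)) as [H1 H2].
  exists (up (s / L) - 1)%Z; rewrite minus_IZR.
  assert (s = s / L * L) by (field; lra).
  split; nra.
Qed.

Lemma locally_Rabs_lt (t0 del t : R) :
  Rabs (t - t0) < del -> locally t (fun u => Rabs (u - t0) < del).
Proof.
  intros Ht; assert (Hpos : 0 < del - Rabs (t - t0)) by lra.
  exists (mkposreal _ Hpos); intros u Hu; change (Rabs (u - t) < del - Rabs (t - t0)) in Hu.
  replace (u - t0) with ((u - t) + (t - t0)) by ring.
  eapply Rle_lt_trans; [apply Rabs_triang|lra].
Qed.

Section PeriodicRays.
Variables (Y y : R -> v3) (L : R).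
Hypothesis HL : 0 < L.
Hypothesis HYper : forall s, Y (s + L) = Y s.
Hypothesis HYinj :
  forall s1 s2, 0 <= s1 < L -> 0 <= s2 < L -> proj_eq (Y s1) (Y s2) -> s1 = s2.
Hypothesis HY0 : forall s, Y s <> vzero.
Hypothesis Hy0 : forall t, y t <> vzero.

Lemma same_ray_period_multiple (s s' c c' t : R) :
  Y s = vscal c (y t) -> Y s' = vscal c' (y t) -> exists n, s - s' = IZR n * L.
Proof.
  intros E E'.
  destruct (exists_shift_into_period L s HL) as [n Hn].
  destruct (exists_shift_into_period L s' HL) as [n' Hn'].
  assert (Hc : c <> 0) by (apply (vscal_neq0 c (y t)); rewrite <- E; apply HY0).
  assert (Hc' : c' <> 0) by (apply (vscal_neq0 c' (y t)); rewrite <- E'; apply HY0).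
  assert (Hshift : forall r m, Y (r - IZR m * L) = Y r).
  { intros r m; rewrite <- (periodic_IZR Y L HYper (- m) r), opp_IZR; f_equal; ring. }
  assert (Heq : s - IZR n * L = s' - IZR n' * L).
  { apply HYinj; [exact Hn|exact Hn'|]; rewrite !Hshift, E, E'.
    split; [rewrite <- E; apply HY0|split; [rewrite <- E'; apply HY0|]].
    exists (c / c'); split; [apply Rmult_integral_contrapositive; split; [exact Hc|apply Rinv_neq_0_compat, Hc']|].
    apply v3_ext; cbv [vscal mkv vx vy vz fst snd]; field; exact Hc'. }
  exists (n - n')%Z; rewrite minus_IZR; lra.
Qed.

Lemma same_ray_eq (s s' t : R) :
  vpar (Y s) (y t) -> vpar (Y s') (y t) -> Rabs (s - s') < L -> s = s'.
Proof.
  intros [c E] [c' E'] Hss'.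
  destruct (same_ray_period_multiple s s' c c' t E E') as [n Hn].
  rewrite Hn, Rabs_mult, (Rabs_pos_eq L), <- abs_IZR in Hss' by lra.
  assert (Hn0 : (Z.abs n < 1)%Z) by (apply lt_IZR; apply (Rmult_lt_reg_r L); lra).
  assert (n = 0%Z) by lia; subst n; simpl in Hn; lra.
Qed.

Lemma same_ray_scalar_eq (s s' c c' t : R) :
  Y s = vscal c (y t) -> Y s' = vscal c' (y t) -> c = c'.
Proof.
  intros E E'; destruct (same_ray_period_multiple s s' c c' t E E') as [n Hn].
  apply (vscal_inj c c' (y t) (Hy0 t)); rewrite <- E, <- E'.
  replace s with (s' + IZR n * L) by lra; apply periodic_IZR, HYper.
Qed.

Hypothesis HYd : forall s, ex_derive (cx Y) s /\ ex_derive (cy Y) s /\ ex_derive (cz Y) s.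
Hypothesis Hyd : forall t, ex_derive (cx y) t /\ ex_derive (cy y) t /\ ex_derive (cz y) t.
Hypothesis HYsurj : forall t, exists s c, Y s = vscal c (y t).

(* The squared sine [D] of the angle with [y t1] has a positive minimum on
   [[s1 + eps, s1 + L - eps]], whereas for [t] near [t1] the ray of [y t] is closer to that of
   [y t1]. *)
Lemma ray_parameter_near (t1 s1 c1 eps : R) :
  Y s1 = vscal c1 (y t1) -> 0 < eps <= L / 2 ->
  locally t1 (fun t => exists s, Rabs (s - s1) < eps /\ vpar (Y s) (y t)).
Proof.
  intros E1 Heps.
  set (D := fun s => vsin2 (vpoint Y s) (y t1)).
  destruct (continuity_ab_min D (s1 + eps) (s1 + L - eps)) as [smin [Hmin Hsmin]];
    [lra|intros s _; destruct (HYd s) as [? [? ?]]; apply continuous_vsin2; auto|].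
  assert (HDmin : 0 < D smin).
  { unfold D, vsin2; rewrite vpointE.
    apply Rdiv_lt_0_compat; [|apply vnorm2_gt0, HY0].
    apply vnorm2_gt0; intros Hc.
    apply vcross_eq0_vpar in Hc; [|apply Hy0].
    assert (smin = s1) by (apply (same_ray_eq smin s1 t1); [exact Hc|exists c1; exact E1|];
                           apply Rabs_lt_between; lra).
    lra. }
  set (Et := fun t => vsin2 (vpoint y t) (y t1)).
  assert (Hnear : locally t1 (fun t => Et t < D smin)).
  { destruct (Hyd t1) as [Dx [Dy Dz]].
    apply (proj1 (continuity_pt_filterlim _ _) (continuous_vsin2 y (y t1) t1 Dx Dy Dz (Hy0 t1))
             (fun r => r < D smin)).
    apply open_lt; rewrite vpointE, vsin2_self; exact HDmin. }
  revert Hnear; apply filter_imp; intros t Ht.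
  destruct (HYsurj t) as [s' [c E]].
  destruct (exists_shift_into_period L (s' - s1) HL) as [n Hn].
  set (s := s' - IZR n * L).
  assert (Es : Y s = vscal c (y t)).
  { rewrite <- E; unfold s; rewrite <- (periodic_IZR Y L HYper (- n) s'), opp_IZR; f_equal; ring. }
  assert (Hc : c <> 0) by (apply (vscal_neq0 c (y t)); rewrite <- Es; apply HY0).
  destruct (Rlt_le_dec (s - s1) eps) as [Hlo|Hlo].
  { exists s; split; [apply Rabs_lt_between; unfold s in *; lra|exists c; exact Es]. }
  destruct (Rlt_le_dec (L - eps) (s - s1)) as [Hhi|Hhi].
  { exists (s - L); split; [apply Rabs_lt_between; unfold s in *; lra|].
    exists c; rewrite <- Es, <- (HYper (s - L)); f_equal; ring. }
  exfalso.
  assert (D s = Et t) by (unfold D, Et; rewrite !vpointE, Es, vsin2_vscal by exact Hc; reflexivity).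
  assert (D smin <= D s) by (apply Hmin; unfold s in *; lra).
  lra.
Qed.

Definition scale_factor (t : R) : R :=
  epsilon (inhabits 0) (fun c => exists s, Y s = vscal c (y t)).

Lemma scale_factor_spec (t : R) : exists s, Y s = vscal (scale_factor t) (y t).
Proof.
  unfold scale_factor; apply epsilon_spec.
  destruct (HYsurj t) as [s [c E]]; exists c, s; exact E.
Qed.

(* [sig t] is chosen within [L / 4] of [s0]; uniqueness of the ray parameter within a window of
   length [L] makes it continuous. *)
Lemma local_ray_section (t0 : R) :
  exists (sig : R -> R) (del : R), 0 < del /\
    forall t, Rabs (t - t0) < del ->
      Y (sig t) = vscal (scale_factor t) (y t) /\ continuous sig t.
Proof.
  destruct (HYsurj t0) as [s0 [c0 E0]].
  set (P := fun t s => Rabs (s - s0) < L / 4 /\ vpar (Y s) (y t)).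
  set (sig := fun t => epsilon (inhabits 0) (P t)).
  destruct (ray_parameter_near t0 s0 c0 (L / 4) E0 ltac:(lra)) as [del Hdel].
  assert (Hsig : forall t, Rabs (t - t0) < del -> P t (sig t))
    by (intros t Ht; apply epsilon_spec, Hdel, Ht).
  exists sig, del; split; [apply cond_pos|]; intros t Ht.
  destruct (Hsig t Ht) as [Hst [c Ec]]; split.
  - destruct (scale_factor_spec t) as [s' Es'].
    rewrite Ec; f_equal; exact (same_ray_scalar_eq _ _ _ _ t Ec Es').
  - apply filterlim_locally; intros eps.
    set (e := Rmin eps (L / 4 - Rabs (sig t - s0))).
    assert (He : 0 < e) by (apply Rmin_pos; [apply cond_pos|lra]).
    assert (Hee : e <= eps) by apply Rmin_l.
    assert (HeL : e <= L / 4 - Rabs (sig t - s0)) by apply Rmin_r.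
    pose proof (Rabs_pos (sig t - s0)).
    assert (Hnear := ray_parameter_near t (sig t) c e Ec ltac:(lra)).
    generalize (filter_and _ _ Hnear (locally_Rabs_lt t0 del t Ht)).
    apply filter_imp; intros t' [[s [Hs Hpar]] Ht'].
    destruct (Hsig t' Ht') as [Hst' Hpar'].
    assert (Hss0 : Rabs (s - s0) < L / 4).
    { replace (s - s0) with ((s - sig t) + (sig t - s0)) by ring.
      eapply Rle_lt_trans; [apply Rabs_triang|lra]. }
    assert (s = sig t').
    { apply (same_ray_eq s (sig t') t' Hpar Hpar').
      replace (s - sig t') with ((s - s0) - (sig t' - s0)) by ring.
      eapply Rle_lt_trans; [apply Rabs_triang|rewrite Rabs_Ropp; lra]. }
    change (Rabs (sig t' - sig t) < eps); subst s; lra.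
Qed.
End PeriodicRays.

(** * Comparing two parametrizations of the same rays *)

Lemma cube_inj (S l : R) : S ^ 3 = l ^ 3 -> S = l.
Proof.
  intros H.
  assert (Hf : (S - l) * ((S + l / 2) ^ 2 + 3 / 4 * l ^ 2) = 0)
    by (replace ((S - l) * ((S + l / 2) ^ 2 + 3 / 4 * l ^ 2)) with (S ^ 3 - l ^ 3) by field; lra).
  apply Rmult_integral in Hf; destruct Hf as [Hf|Hf]; [lra|].
  pose proof (pow2_ge_0 (S + l / 2)); pose proof (pow2_ge_0 l).
  assert (l = 0) by nra; subst l; nra.
Qed.

Lemma second_order_normal_form (A B y0 y1 y2 l l1 l2 : R) : l <> 0 ->
  B * l = l1 * y0 + l * y1 -> A * l * l + B * l1 = l2 * y0 + 2 * l1 * y1 + l * y2 ->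
  l * A - l1 / l * y1 - y2 = (l2 / l - (l1 / l) ^ 2) * y0.
Proof.
  intros Hl H1 H2.
  apply Rmult_eq_reg_r with (l * l); [|apply Rmult_integral_contrapositive; auto].
  replace ((l * A - l1 / l * y1 - y2) * (l * l))
    with (l * (A * l * l + B * l1) - l1 * (B * l) - l1 * l * y1 - y2 * l * l) by (field; auto).
  rewrite H1, H2; field; exact Hl.
Qed.

Lemma riccati_coefficients (l l1 m m1 m2 A A3 b y0 y1 y2 y3 al be dal : R) :
  l1 = m * l -> l * A - m * y1 - y2 = m1 * y0 -> A3 = - b * (l * y0) ->
  y3 = - (2 * al * y1) - (dal + be) * y0 ->
  l1 * A + l * (A3 * l) - m1 * y1 - m * y2 - y3 = m2 * y0 + m1 * y1 ->
  (m * m1 - b * l ^ 3 + dal + be - m2) * y0 + (m ^ 2 - 2 * m1 + 2 * al) * y1 = 0.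
Proof.
  intros -> HQ -> -> HD.
  replace (m * l * A) with (m * (m1 * y0 + m * y1 + y2)) in HD by (rewrite <- HQ; ring).
  lra.
Qed.

Section LocalReparametrization.
Variables (Y y : R -> v3) (bt alpha beta sig lam : R -> R) (N : R -> Prop).
Hypothesis HYd : diff_upto 3 Y.
Hypothesis Hyd : diff_upto 3 y.
Hypothesis HYeq : forall s, vadd (Dv Y 3 s) (vscal (bt s) (Y s)) = vzero.
Hypothesis Hyeq : forall t, vadd (vadd (Dv y 3 t) (vscal (2 * alpha t) (Dv y 1 t)))
                               (vscal (Derive alpha t + beta t) (y t)) = vzero.
Hypothesis HYdet : forall s, det3 (Dv Y 2 s) (Dv Y 1 s) (Y s) = 1.
Hypothesis Hydet : forall t, det3 (Dv y 2 t) (Dv y 1 t) (y t) = 1.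
Hypothesis HN : forall t, N t -> locally t N.
Hypothesis Hrel : forall t, N t -> Y (sig t) = vscal (lam t) (y t).
Hypothesis Hcont : forall t, N t -> continuous sig t.

Lemma locally_N (t : R) (P : R -> Prop) : N t -> (forall u, N u -> P u) -> locally t P.
Proof. intros Ht HP; apply (filter_imp N); [exact HP|exact (HN t Ht)]. Qed.

Lemma ex_derive_ext_N (f g : R -> R) (t : R) :
  N t -> (forall u, N u -> f u = g u) -> ex_derive f t -> ex_derive g t.
Proof. intros Ht H; apply ex_derive_ext_loc, locally_N; assumption. Qed.

Lemma Y_neq0 (s : R) : Y s <> vzero.
Proof. exact (det3_eq1_neq0 _ _ _ (HYdet s)). Qed.

Lemma y_neq0 (t : R) : y t <> vzero.
Proof. exact (det3_eq1_neq0 _ _ _ (Hydet t)). Qed.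

Lemma scale_neq0 (t : R) : N t -> lam t <> 0.
Proof. intros Ht; apply (vscal_neq0 _ (y t)); rewrite <- Hrel by exact Ht; apply Y_neq0. Qed.

(* [g] and [f] evaluate the same scale-invariant ratio along [Y] and [y]; [a] is chosen
   orthogonal to [p = Y (sig t)], so that [g'(sig t) = |q x p|^2 / |p|^4 <> 0]. *)
Lemma ex_derive_sig (t : R) : N t -> ex_derive sig t.
Proof.
  intros Ht.
  set (p := Y (sig t)); set (q := Dv Y 1 (sig t)); set (a := vorth q p).
  assert (Hp : p <> vzero) by apply Y_neq0.
  assert (Hpp : 0 < vnorm2 p) by exact (vnorm2_gt0 p Hp).
  assert (Hqa : 0 < vdot q a * vnorm2 p).
  { unfold a; rewrite (vdot_vorth q p Hp); apply vnorm2_gt0, (det3_vcross_neq0 (Dv Y 2 (sig t))), HYdet. }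
  destruct (HYd 1%nat ltac:(lia) (sig t)) as [DYx [DYy DYz]].
  destruct (Hyd 1%nat ltac:(lia) t) as [Dyx [Dyy Dyz]].
  eexists; apply (is_derive_implicit sig (fun u => vdot (vpoint y u) a / vdot (vpoint y u) p)
                                         (fun u => vdot (vpoint Y u) a / vdot (vpoint Y u) p)).
  - apply locally_N; [exact Ht|]; intros u Hu.
    rewrite !vpointE, Hrel, !vdot_vscal by exact Hu.
    apply Rdiv_mult_l_l, scale_neq0, Hu.
  - exact (Hcont t Ht).
  - apply is_derive_vdot_ratio; [exact DYx|exact DYy|exact DYz|change (vnorm2 p <> 0); lra].
  - change ((vdot q a * vnorm2 p - vdot p a * vdot q p) / (vnorm2 p * vnorm2 p) <> 0).
    unfold a; rewrite (vdot_vorth_r q p Hp), Rmult_0_l, Rminus_0_r.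
    apply Rgt_not_eq, Rdiv_lt_0_compat; [exact Hqa|nra].
  - apply is_derive_vdot_ratio; [exact Dyx|exact Dyy|exact Dyz|].
    unfold p; rewrite Hrel by exact Ht.
    replace (vdot (y t) (vscal (lam t) (y t))) with (lam t * vnorm2 (y t))
      by (cbv [vnorm2 vdot vscal mkv vx vy vz fst snd]; ring).
    apply Rmult_integral_contrapositive; split;
      [apply scale_neq0, Ht|apply Rgt_not_eq, vnorm2_gt0, y_neq0].
Qed.

Lemma ex_derive_scale (t : R) : N t -> ex_derive lam t.
Proof.
  intros Ht.
  apply (ex_derive_ext_N (fun u => vdot (vpoint Y (sig u)) (vpoint y u) / vnorm2 (vpoint y u)));
    [exact Ht| |].
  { intros u Hu.
    rewrite !vpointE, Hrel, vdot_vscal by exact Hu; unfold vnorm2.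
    field; apply Rgt_not_eq, vnorm2_gt0, y_neq0. }
  pose proof (vnorm2_gt0 _ (y_neq0 t)) as P; rewrite <- (vpointE y t) in P; revert P.
  pose proof (ex_derive_sig t Ht).
  destruct (HYd 1%nat ltac:(lia) (sig t)) as [? [? ?]]; destruct (Hyd 1%nat ltac:(lia) t) as [? [? ?]].
  cbv [vdot vnorm2 vpoint mkv vx vy vz fst snd]; intros P.
  auto_derive; repeat split; auto; lra.
Qed.

Lemma coordinate_rel (pr : v3 -> R) (t : R) :
  coordinate pr -> N t -> pr (Y (sig t)) = lam t * pr (y t).
Proof. intros Hpr Ht; rewrite Hrel, coordinate_vscal by assumption; reflexivity. Qed.

Lemma first_derivative_coordinate (pr : v3 -> R) (t : R) : coordinate pr -> N t ->
  Derive (fun s => pr (Y s)) (sig t) * Derive sig t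
  = Derive lam t * pr (y t) + lam t * Derive (fun s => pr (y s)) t.
Proof.
  intros Hpr Ht; apply (Derive_reparam_scale (fun s => pr (Y s)) (fun s => pr (y s))).
  - apply locally_N; [exact Ht|]; intros u Hu; exact (coordinate_rel pr u Hpr Hu).
  - exact (ex_derive_coordinate 3 Y pr 0 (sig t) HYd Hpr ltac:(lia)).
  - exact (ex_derive_sig t Ht).
  - exact (ex_derive_scale t Ht).
  - exact (ex_derive_coordinate 3 y pr 0 t Hyd Hpr ltac:(lia)).
Qed.

Lemma first_derivative_rel (t : R) : N t ->
  vscal (Derive sig t) (Dv Y 1 (sig t))
  = vadd (vscal (Derive lam t) (y t)) (vscal (lam t) (Dv y 1 t)).
Proof.
  intros Ht; apply v3_ext_coordinate; intros pr Hpr.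
  rewrite coordinate_vadd, !coordinate_vscal, !Dv_coordinate by exact Hpr.
  rewrite Rmult_comm; exact (first_derivative_coordinate pr t Hpr Ht).
Qed.

Lemma vcross_Dv_Y_y_neq0 (t : R) : N t -> vcross (Dv Y 1 (sig t)) (y t) <> vzero.
Proof.
  intros Ht E; pose proof (HYdet (sig t)) as D.
  rewrite Hrel, det3_vscal_r, E in D by exact Ht; revert D.
  cbv [vdot vzero mkv vx vy vz fst snd]; lra.
Qed.

(* Crossing, resp. dotting, [first_derivative_rel] with [y] expresses [sig'], resp. [lam'], by
   functions already known to be differentiable. *)
Lemma ex_derive_Derive_sig (t : R) : N t -> ex_derive (Derive sig) t.
Proof.
  intros Ht.
  apply (ex_derive_ext_N (fun u => lam u * vdot (vcross (Dv y 1 u) (vpoint y u))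
                                                (vcross (Dv Y 1 (sig u)) (vpoint y u))
                                    / vnorm2 (vcross (Dv Y 1 (sig u)) (vpoint y u))));
    [exact Ht| |].
  { intros u Hu; rewrite vpointE.
    pose proof (vnorm2_gt0 _ (vcross_Dv_Y_y_neq0 u Hu)).
    rewrite <- (vscal_combination_vcross _ _ _ _ _ _ (first_derivative_rel u Hu)); field; lra. }
  pose proof (vnorm2_gt0 _ (vcross_Dv_Y_y_neq0 t Ht)) as P; rewrite <- (vpointE y t) in P; revert P.
  pose proof (ex_derive_sig t Ht); pose proof (ex_derive_scale t Ht).
  destruct (HYd 2%nat ltac:(lia) (sig t)) as [? [? ?]].
  destruct (Hyd 1%nat ltac:(lia) t) as [? [? ?]]; destruct (Hyd 2%nat ltac:(lia) t) as [? [? ?]].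
  cbv [vdot vnorm2 vcross vpoint Dv mkv vx vy vz fst snd]; simpl Derive_n in *; intros P.
  auto_derive; repeat split; auto; lra.
Qed.

Lemma ex_derive_Derive_scale (t : R) : N t -> ex_derive (Derive lam) t.
Proof.
  intros Ht.
  apply (ex_derive_ext_N (fun u => (Derive sig u * vdot (Dv Y 1 (sig u)) (vpoint y u)
                                     - lam u * vdot (Dv y 1 u) (vpoint y u)) / vnorm2 (vpoint y u)));
    [exact Ht| |].
  { intros u Hu; rewrite !vpointE.
    pose proof (vnorm2_gt0 _ (y_neq0 u)).
    rewrite (vscal_combination_vdot _ _ _ _ _ _ (first_derivative_rel u Hu)); field; lra. }
  pose proof (vnorm2_gt0 _ (y_neq0 t)) as P; rewrite <- (vpointE y t) in P; revert P.
  pose proof (ex_derive_sig t Ht); pose proof (ex_derive_scale t Ht); pose proof (ex_derive_Derive_sig t Ht).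
  destruct (HYd 2%nat ltac:(lia) (sig t)) as [? [? ?]].
  destruct (Hyd 1%nat ltac:(lia) t) as [? [? ?]]; destruct (Hyd 2%nat ltac:(lia) t) as [? [? ?]].
  cbv [vdot vnorm2 vpoint Dv mkv vx vy vz fst snd]; simpl Derive_n in *; intros P.
  auto_derive; repeat split; auto; lra.
Qed.

Lemma second_derivative_coordinate (pr : v3 -> R) (t : R) : coordinate pr -> N t ->
  Derive (Derive (fun s => pr (Y s))) (sig t) * Derive sig t * Derive sig t
    + Derive (fun s => pr (Y s)) (sig t) * Derive (Derive sig) t
  = Derive (Derive lam) t * pr (y t) + 2 * Derive lam t * Derive (fun s => pr (y s)) t
    + lam t * Derive (Derive (fun s => pr (y s))) t.
Proof.
  intros Hpr Ht; apply (Derive2_reparam_scale (fun s => pr (Y s)) (fun s => pr (y s))).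
  - apply locally_N; [exact Ht|]; intros u Hu; exact (first_derivative_coordinate pr u Hpr Hu).
  - exact (ex_derive_coordinate 3 Y pr 1 (sig t) HYd Hpr ltac:(lia)).
  - exact (ex_derive_sig t Ht).
  - exact (ex_derive_Derive_sig t Ht).
  - exact (ex_derive_scale t Ht).
  - exact (ex_derive_Derive_scale t Ht).
  - exact (ex_derive_coordinate 3 y pr 0 t Hyd Hpr ltac:(lia)).
  - exact (ex_derive_coordinate 3 y pr 1 t Hyd Hpr ltac:(lia)).
Qed.

Lemma second_derivative_rel (t : R) : N t ->
  vadd (vscal (Derive sig t * Derive sig t) (Dv Y 2 (sig t)))
       (vscal (Derive (Derive sig) t) (Dv Y 1 (sig t)))
  = vadd (vadd (vscal (Derive (Derive lam) t) (y t)) (vscal (2 * Derive lam t) (Dv y 1 t)))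
         (vscal (lam t) (Dv y 2 t)).
Proof.
  intros Ht; apply v3_ext_coordinate; intros pr Hpr.
  rewrite !coordinate_vadd, !coordinate_vscal, !Dv_coordinate by exact Hpr; simpl; etafold.
  rewrite <- (second_derivative_coordinate pr t Hpr Ht); ring.
Qed.

(* Taking determinants in [Y (sig t) = lam t * y t] and its first two derivatives gives
   [sig'^3 = lam^3]. *)
Lemma Derive_sig_eq_scale (t : R) : N t -> Derive sig t = lam t.
Proof.
  intros Ht; apply cube_inj.
  apply (det3_reparam_cube (Dv Y 2 (sig t)) (Dv Y 1 (sig t)) (Y (sig t)) (Dv y 2 t) (Dv y 1 t) (y t)
           _ (Derive (Derive sig) t) _ (Derive lam t) (Derive (Derive lam) t));
    [apply HYdet|apply Hydet|exact (Hrel t Ht)|exact (first_derivative_rel t Ht)|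
     exact (second_derivative_rel t Ht)].
Qed.

Lemma Derive2_sig_eq_Derive_scale (t : R) : N t -> Derive (Derive sig) t = Derive lam t.
Proof.
  intros Ht; apply Derive_ext_loc, locally_N; [exact Ht|exact Derive_sig_eq_scale].
Qed.

Lemma is_derive_dlog_scale (t : R) : N t ->
  is_derive (dlog lam) t (Derive (Derive lam) t / lam t - dlog lam t ^ 2).
Proof.
  intros Ht; apply is_derive_dlog;
    [apply scale_neq0|apply ex_derive_scale|apply ex_derive_Derive_scale]; exact Ht.
Qed.

Lemma normal_form_coordinate (pr : v3 -> R) (t : R) : coordinate pr -> N t ->
  lam t * Derive (Derive (fun s => pr (Y s))) (sig t)
    - dlog lam t * Derive (fun s => pr (y s)) t - Derive (Derive (fun s => pr (y s))) t
  = Derive (dlog lam) t * pr (y t).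
Proof.
  intros Hpr Ht; rewrite (is_derive_unique _ _ _ (is_derive_dlog_scale t Ht)); unfold dlog.
  apply (second_order_normal_form _ (Derive (fun s => pr (Y s)) (sig t))); [apply scale_neq0, Ht| |].
  - pose proof (first_derivative_coordinate pr t Hpr Ht) as E.
    rewrite Derive_sig_eq_scale in E by exact Ht; exact E.
  - pose proof (second_derivative_coordinate pr t Hpr Ht) as E.
    rewrite Derive2_sig_eq_Derive_scale, Derive_sig_eq_scale in E by exact Ht; exact E.
Qed.

Lemma normal_form_rel (t : R) : N t ->
  vadd (vadd (vscal (lam t) (Dv Y 2 (sig t))) (vscal (- dlog lam t) (Dv y 1 t)))
       (vscal (-1) (Dv y 2 t))
  = vscal (Derive (dlog lam) t) (y t).
Proof.
  intros Ht; apply v3_ext_coordinate; intros pr Hpr.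
  rewrite !coordinate_vadd, !coordinate_vscal, !Dv_coordinate by exact Hpr; simpl; etafold.
  rewrite <- (normal_form_coordinate pr t Hpr Ht); ring.
Qed.

Lemma ex_derive_Derive_dlog_scale (t : R) : N t -> ex_derive (Derive (dlog lam)) t.
Proof.
  intros Ht.
  apply (ex_derive_ext_N (fun u =>
    vdot (vadd (vadd (vscal (lam u) (Dv Y 2 (sig u))) (vscal (- dlog lam u) (Dv y 1 u)))
               (vscal (-1) (Dv y 2 u))) (vpoint y u) / vnorm2 (vpoint y u))); [exact Ht| |].
  { intros u Hu; rewrite normal_form_rel, vpointE, vdot_vscal by exact Hu; unfold vnorm2.
    field; apply Rgt_not_eq, vnorm2_gt0, y_neq0. }
  pose proof (vnorm2_gt0 _ (y_neq0 t)) as P; rewrite <- (vpointE y t) in P; revert P.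
  pose proof (ex_derive_sig t Ht); pose proof (ex_derive_scale t Ht).
  assert (ex_derive (dlog lam) t) by (eexists; apply is_derive_dlog_scale, Ht).
  destruct (HYd 3%nat ltac:(lia) (sig t)) as [? [? ?]].
  destruct (Hyd 1%nat ltac:(lia) t) as [? [? ?]]; destruct (Hyd 2%nat ltac:(lia) t) as [? [? ?]];
    destruct (Hyd 3%nat ltac:(lia) t) as [? [? ?]].
  cbv [vdot vnorm2 vadd vscal vpoint Dv mkv vx vy vz fst snd]; simpl Derive_n in *; intros P.
  auto_derive; repeat split; auto; lra.
Qed.

Lemma third_derivative_Y_coordinate (pr : v3 -> R) (t : R) : coordinate pr -> N t ->
  Derive (Derive (Derive (fun s => pr (Y s)))) (sig t) = - bt (sig t) * (lam t * pr (y t)).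
Proof.
  intros Hpr Ht; pose proof (f_equal pr (HYeq (sig t))) as E.
  rewrite coordinate_vadd, coordinate_vscal, coordinate_vzero, Dv_coordinate, coordinate_rel in E
    by assumption.
  simpl in E; etafold; lra.
Qed.

Lemma third_derivative_y_coordinate (pr : v3 -> R) (t : R) : coordinate pr ->
  Derive (Derive (Derive (fun s => pr (y s)))) t
  = - (2 * alpha t * Derive (fun s => pr (y s)) t) - (Derive alpha t + beta t) * pr (y t).
Proof.
  intros Hpr; pose proof (f_equal pr (Hyeq t)) as E.
  rewrite !coordinate_vadd, !coordinate_vscal, coordinate_vzero, !Dv_coordinate in E by exact Hpr.
  simpl in E; etafold; lra.
Qed.

(* Differentiating the normal form once more and eliminating the third derivatives leaves a
   combination of [y] and [y'] only. *)
Lemma riccati_coordinate (pr : v3 -> R) (t : R) : coordinate pr -> N t ->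
  (dlog lam t * Derive (dlog lam) t - bt (sig t) * lam t ^ 3 + Derive alpha t + beta t
     - Derive (Derive (dlog lam)) t) * pr (y t)
  + (dlog lam t ^ 2 - 2 * Derive (dlog lam) t + 2 * alpha t) * pr (Dv y 1 t) = 0.
Proof.
  intros Hpr Ht; rewrite Dv_coordinate by exact Hpr; simpl.
  pose proof (ex_derive_sig t Ht); pose proof (ex_derive_scale t Ht).
  assert (ex_derive (dlog lam) t) by (eexists; apply is_derive_dlog_scale, Ht).
  pose proof (ex_derive_Derive_dlog_scale t Ht).
  pose proof (ex_derive_coordinate 3 Y pr 2 (sig t) HYd Hpr ltac:(lia)).
  pose proof (ex_derive_coordinate 3 y pr 0 t Hyd Hpr ltac:(lia)).
  pose proof (ex_derive_coordinate 3 y pr 1 t Hyd Hpr ltac:(lia)).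
  pose proof (ex_derive_coordinate 3 y pr 2 t Hyd Hpr ltac:(lia)).
  pose proof (normal_form_coordinate pr t Hpr Ht) as HQ0.
  pose proof (third_derivative_Y_coordinate pr t Hpr Ht) as HY3.
  pose proof (third_derivative_y_coordinate pr t Hpr) as Hy3.
  simpl in *; set (Yc := fun s => pr (Y s)) in *; set (yc := fun s => pr (y s)) in *.
  set (Q := fun u => lam u * Derive (Derive Yc) (sig u) - dlog lam u * Derive yc u
                     - Derive (Derive yc) u).
  assert (HQ : is_derive Q t
    (Derive lam t * Derive (Derive Yc) (sig t)
     + lam t * (Derive (Derive (Derive Yc)) (sig t) * Derive sig t)
     - Derive (dlog lam) t * Derive yc t - dlog lam t * Derive (Derive yc) t
     - Derive (Derive (Derive yc)) t))
    by (unfold Q; auto_derive; [repeat split; assumption|etafold; ring]).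
  assert (HQ' : is_derive Q t
    (Derive (Derive (dlog lam)) t * yc t + Derive (dlog lam) t * Derive yc t)).
  { apply (is_derive_ext_loc (fun u => Derive (dlog lam) u * yc u)).
    - apply locally_N; [exact Ht|]; intros u Hu; symmetry.
      exact (normal_form_coordinate pr u Hpr Hu).
    - auto_derive; [repeat split; assumption|etafold; ring]. }
  pose proof (eq_trans (eq_sym (is_derive_unique _ _ _ HQ)) (is_derive_unique _ _ _ HQ')) as E.
  rewrite Derive_sig_eq_scale in E by exact Ht.
  apply riccati_coefficients with (l1 := Derive lam t) (A := Derive (Derive Yc) (sig t))
    (A3 := Derive (Derive (Derive Yc)) (sig t)) (y2 := Derive (Derive yc) t)
    (y3 := Derive (Derive (Derive yc)) t);
    [unfold dlog; field; apply scale_neq0, Ht|exact HQ0|exact HY3|exact Hy3|exact E].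
Qed.

Lemma scale_riccati (t : R) : N t -> 2 * Derive (dlog lam) t = dlog lam t ^ 2 + 2 * alpha t.
Proof.
  intros Ht.
  assert (H0 : dlog lam t ^ 2 - 2 * Derive (dlog lam) t + 2 * alpha t = 0); [|lra].
  apply (det3_eq1_independent (Dv y 2 t) (Dv y 1 t) (y t)
           (dlog lam t * Derive (dlog lam) t - bt (sig t) * lam t ^ 3 + Derive alpha t + beta t
            - Derive (Derive (dlog lam)) t)); [apply Hydet|].
  apply v3_ext_coordinate; intros pr Hpr.
  rewrite coordinate_vadd, !coordinate_vscal, coordinate_vzero by exact Hpr.
  exact (riccati_coordinate pr t Hpr Ht).
Qed.

Lemma local_scale_riccati (t : R) : N t -> riccati_scale alpha lam t.
Proof.
  intros Ht; split; [|split; [|split]].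
  - exact (scale_neq0 t Ht).
  - exact (ex_derive_scale t Ht).
  - eexists; exact (is_derive_dlog_scale t Ht).
  - exact (scale_riccati t Ht).
Qed.
End LocalReparametrization.

Lemma param_meets_boundary_rays (K : v3 -> Prop) (y Y : R -> v3) (L : R) :
  (forall t, boundary K (y t)) -> (forall t, y t <> vzero) ->
  (forall v, in_gamma K v -> exists s, 0 <= s < L /\ proj_eq (Y s) v) ->
  forall t, exists s c, Y s = vscal c (y t).
Proof.
  intros Hbdy Hy0 Hsurj t.
  destruct (Hsurj (y t)) as [s [_ [_ [_ [c [_ E]]]]]]; [|exists s, c; exact E].
  exists (y t); split; [apply Hbdy|split; [apply Hy0|split; [apply Hy0|split; [apply Hy0|]]]].
  exists 1; split; [lra|apply v3_ext; cbv [vscal mkv vx vy vz fst snd]; ring].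
Qed.

Theorem corollary2 (k : nat) (K : v3 -> Prop) (alpha beta : R -> R) (y : R -> v3) :
  (5 <= k)%nat ->
  regular_convex_cone K ->
  Ck_pos_curved_boundary k K ->
  Ck (k - 4) alpha -> Ck (k - 5) beta ->
  (forall t, alpha (t + 2 * PI) = alpha t) ->
  (forall t, beta (t + 2 * PI) = beta t) ->
  (* y is a 2pi-periodic solution of y''' + 2 alpha y' + alpha' y + beta y = 0 *)
  diff_upto 3 y ->
  (forall t, y (t + 2 * PI) = y t) ->
  (forall t, vadd (vadd (Dv y 3 t) (vscal (2 * alpha t) (Dv y 1 t)))
                  (vscal (Derive alpha t + beta t) (y t)) = vzero) ->
  (forall t, det3 (Dv y 2 t) (Dv y 1 t) (y t) = 1) ->
  (* y runs along the boundary of K, its projective image is gamma,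
     and it makes exactly one turn per period *)
  (forall t, boundary K (y t)) ->
  (forall v, boundary K v -> v <> vzero ->
     exists t, 0 <= t < 2 * PI /\ proj_eq (y t) v) ->
  (forall s t, 0 <= s < 2 * PI -> 0 <= t < 2 * PI -> proj_eq (y s) (y t) -> s = t) ->
  (* the monodromy of x'' + 1/2 alpha x = 0 does not have eigenvalue 1 *)
  (exists a b c d, is_monodromy alpha a b c d /\ ~ has_eigenvalue_one a b c d) ->
  ~ global_periodic_FL_param K.
Proof.
  intros _ _ _ _ _ _ _ Hyd Hyper Hyeq Hydet Hbdy _ _ [a [b [c [d [Hmono Hne]]]]]
    [L [Y [bt [HL [HYd [HYper [_ [HYinj [HYsurj [HYdet HYeq]]]]]]]]]].
  apply Hne.
  assert (HY0 : forall s, Y s <> vzero) by (intros s; exact (det3_eq1_neq0 _ _ _ (HYdet s))).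
  assert (Hy0 : forall t, y t <> vzero) by (intros t; exact (det3_eq1_neq0 _ _ _ (Hydet t))).
  set (lam := scale_factor Y y).
  assert (Hric : forall t0, riccati_scale alpha lam t0).
  { intros t0.
    destruct (local_ray_section Y y L HL HYper HYinj HY0 Hy0
                (fun s => diff_upto_ex_derive 3 Y s HYd ltac:(lia))
                (fun t => diff_upto_ex_derive 3 y t Hyd ltac:(lia))
                (param_meets_boundary_rays K y Y L Hbdy Hy0 HYsurj) t0)
      as [sig [del [Hdel Hsec]]].
    apply (local_scale_riccati Y y bt alpha beta sig lam (fun t => Rabs (t - t0) < del));
      auto; [apply locally_Rabs_lt|apply Hsec|apply Hsec|rewrite Rminus_diag, Rabs_R0; exact Hdel]. }
  apply (positive_periodic_hill_eigenvalue_one alpha (fun t => exp (- / 4 * ln (lam t ^ 2))));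
    [apply hill_solution_of_scale, Hric|intros t; apply exp_pos| |exact Hmono].
  intros t; unfold lam, scale_factor; rewrite Hyper; reflexivity.
Qed.
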